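(* An idempotent unital commutative semiring is fully elementary if and only if it is Frobenius.
   Context: A semiring $(X,+,0,\cdot)$: $(X,+,0)$ commutative monoid, $(X,\cdot)$ semigroup, distributivity, $0$ absorbing. Unital: has a multiplicative unit; idempotent: $x+x=x$ for all $x$. $X$ is Frobenius if $(x+y)^n=x^n+y^n$ for all $x,y\in X$ and all integers $n\ge1$. Polynomials in $n$ variables are functions $X^n\to X$ represented by formal expressions $\sum_{k} a_k\prod_{j=1}^n x_j^{d_{k,j}}$ ($a_k\in X$). A polynomial is symmetric if represented by an expression which, with each monomial $a_k\prod_j x_j^{d_{k,j}}$, contains all monomials $a_k\prod_j x_{\sigma(j)}^{d_{k,j}}$, $\sigma\in S_n$. $e_j$ is the sum of all products of $j$ distinct variables among $x_1,\dots,x_n$. $X$ is $n$-elementary if every symmetric polynomial $p$ in $n$ variables equals $r(e_1,\dots,e_n)$ (as functions on $X^n$) for some polynomial $r$; fully elementary if $n$-elementary for all $n\in\mathbb{N}$. *)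

From HB Require Import structures.
From mathcomp Require Import all_boot all_order all_algebra all_fingroup.
Set Implicit Arguments. Unset Strict Implicit. Unset Printing Implicit Defensive.
Import GRing.Theory.
Local Open Scope ring_scope.

(* Semirings: MathComp's comPzSemiRingType is exactly a commutative unital
   semiring (commutative additive monoid, associative commutative
   multiplication with unit, distributivity, 0 absorbing). *)

Section Defs.
Variable X : comPzSemiRingType.

Definition idempotent_sr : Prop := forall x : X, x + x = x.

Definition frobenius : Prop :=
  forall (x y : X) (n : nat), (0 < n)%N -> (x + y) ^+ n = x ^+ n + y ^+ n.

(* A formal polynomial expression in n variables: a finite list of
   monomials (a_k, d_k), with coefficient a_k and exponent vector d_k. *)
Definition pexpr (n : nat) := seq (X * {ffun 'I_n -> nat}).

Definition peval (n : nat) (p : pexpr n) (x : 'I_n -> X) : X :=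
  \sum_(m <- p) (m.1 * \prod_(j < n) x j ^+ m.2 j).

(* The monomial a * prod_j x_(s j)^(d j) has exponent d (s^-1 i) at x_i. *)
Definition perm_mono (n : nat) (s : 'S_n) (m : X * {ffun 'I_n -> nat}) :
    X * {ffun 'I_n -> nat} :=
  (m.1, [ffun i => m.2 (s^-1%g i)]).

Definition sym_pexpr (n : nat) (p : pexpr n) : Prop :=
  forall m, m \in p -> forall s : 'S_n, perm_mono s m \in p.

(* Elementary symmetric polynomial e_j (j = 1..n, indexed by j.-1 : 'I_n). *)
Definition esym (n : nat) (x : 'I_n -> X) (j : nat) : X :=
  \sum_(S : {set 'I_n} | #|S| == j) \prod_(i in S) x i.

Definition elem_vec (n : nat) (x : 'I_n -> X) : 'I_n -> X :=
  fun j => esym x j.+1.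

Definition n_elementary (n : nat) : Prop :=
  forall p : pexpr n, sym_pexpr p ->
    exists r : pexpr n, forall x : 'I_n -> X,
      peval p x = peval r (elem_vec x).

Definition fully_elementary : Prop := forall n : nat, n_elementary n.

End Defs.

From Pilot Require Import Defs.
From mathcomp Require Import all_boot all_order all_algebra all_fingroup.
From mathcomp Require Import ring.
Set Implicit Arguments. Unset Strict Implicit. Unset Printing Implicit Defensive.
Import GRing.Theory.
Local Open Scope ring_scope.

(* In an idempotent semiring, [a <=: b := a + b = b] is a partial order
   compatible with [+] and [*], for which sums are least upper bounds.
   The Frobenius identity gives [u^a v^(b+1) <=: u^(a+1) v^b + v^(a+1) u^b]
   for [b <= a]; repeated exchanges of this kind show that the orbit sum
   (sum over all permutations of the variables) of the monomial with exponent
   [d + 1_S], where [S] carries the largest exponents of [d], is the orbit sum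
   of [d] times [e_|S|].  Peeling off supports, every orbit sum is a monomial
   in [e_1, ..., e_n], and a symmetric expression is a combination of orbit
   sums.  Conversely, [x1^k + x2^k] takes the value [(u+v)^k] at [(u+v, 0)] and
   [u^k + v^k] at [(u, v)], while every [e_j] at [(u+v, 0)] is below its value
   at [(u, v)]; so [(u+v)^k <=: u^k + v^k], and the converse inequality always
   holds. *)

Section IdempotentSemiring.
Variable X : comPzSemiRingType.
Hypothesis idem : idempotent_sr X.

Definition idem_le (a b : X) := a + b = b.
Local Notation "a <=: b" := (idem_le a b) (at level 70).

Lemma ile_refl a : a <=: a. Proof. exact: idem. Qed.

Lemma ile_trans a b c : a <=: b -> b <=: c -> a <=: c.
Proof. by rewrite /idem_le => hab hbc; rewrite -hbc addrA hab. Qed.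

Lemma ile_anti a b : a <=: b -> b <=: a -> a = b.
Proof. by rewrite /idem_le => hab hba; rewrite -hba addrC hab. Qed.

Lemma ile0 a : 0 <=: a. Proof. by rewrite /idem_le add0r. Qed.

Lemma ile_addl a b : a <=: a + b. Proof. by rewrite /idem_le addrA idem. Qed.

Lemma ile_addr a b : b <=: a + b. Proof. by rewrite addrC; apply: ile_addl. Qed.

Lemma ile_add a b c : a <=: c -> b <=: c -> a + b <=: c.
Proof. by rewrite /idem_le => hac hbc; rewrite -addrA hbc hac. Qed.

Lemma ile_add2 a b c d : a <=: b -> c <=: d -> a + c <=: b + d.
Proof.
by move=> hab hcd; apply: ile_add;
  [apply: ile_trans hab (ile_addl _ _) | apply: ile_trans hcd (ile_addr _ _)].
Qed.

Lemma ile_mull a b c : a <=: b -> c * a <=: c * b.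
Proof. by rewrite /idem_le => hab; rewrite -mulrDr hab. Qed.

Lemma ile_mulr a b c : a <=: b -> a * c <=: b * c.
Proof. by rewrite /idem_le => hab; rewrite -mulrDl hab. Qed.

Lemma ile_mul2 a b c d : a <=: b -> c <=: d -> a * c <=: b * d.
Proof. by move=> hab hcd; apply: ile_trans (ile_mull a hcd) (ile_mulr d hab). Qed.

Lemma ile_expn a b k : a <=: b -> a ^+ k <=: b ^+ k.
Proof.
move=> hab; elim: k => [|k IHk]; first by rewrite !expr0; apply: ile_refl.
by rewrite !exprS; apply: ile_mul2.
Qed.

Lemma ile_sum I (r : seq I) (P : pred I) (F : I -> X) c :
  (forall i, P i -> F i <=: c) -> \sum_(i <- r | P i) F i <=: c.
Proof.
by move=> hF; apply: (big_ind (idem_le^~ c));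
  [apply: ile0 | move=> ? ? /= ha hb; apply: ile_add ha hb |].
Qed.

Lemma ile_sum_term (I : eqType) (r : seq I) (P : pred I) (F : I -> X) i :
  i \in r -> P i -> F i <=: \sum_(j <- r | P j) F j.
Proof.
elim: r => // j r IHr; rewrite inE big_cons => /orP[/eqP <- | ir] Pi.
  by rewrite Pi; apply: ile_addl.
by case: ifP => _; [apply: ile_trans (IHr ir Pi) (ile_addr _ _) | apply: IHr].
Qed.

Lemma ile_sum2 I (r : seq I) (P : pred I) (F G : I -> X) :
  (forall i, P i -> F i <=: G i) ->
  \sum_(i <- r | P i) F i <=: \sum_(i <- r | P i) G i.
Proof.
by move=> hFG; apply: (big_ind2 idem_le);
  [apply: ile_refl | move=> ? ? ? ?; apply: ile_add2 |].
Qed.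

Lemma ile_prod2 I (r : seq I) (P : pred I) (F G : I -> X) :
  (forall i, P i -> F i <=: G i) ->
  \prod_(i <- r | P i) F i <=: \prod_(i <- r | P i) G i.
Proof.
by move=> hFG; apply: (big_ind2 idem_le);
  [apply: ile_refl | move=> ? ? ? ?; apply: ile_mul2 |].
Qed.

Lemma peval_ile n (r : pexpr X n) x y :
  (forall j, x j <=: y j) -> peval r x <=: peval r y.
Proof.
move=> hxy; apply: ile_sum2 => m _; apply: ile_mull.
by apply: ile_prod2 => j _; apply: ile_expn.
Qed.

Lemma frobenius_exchange (u v : X) (a b : nat) : frobenius X -> (b <= a)%N ->
  u ^+ a * v ^+ b.+1 <=: u ^+ a.+1 * v ^+ b + v ^+ a.+1 * u ^+ b.
Proof.
move=> fr /subnK <-; set t := (a - b)%N.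
have -> : u ^+ (t + b) * v ^+ b.+1 = (u ^+ t * v) * (u ^+ b * v ^+ b).
  by rewrite exprD exprSr; ring.
have -> : u ^+ (t + b).+1 * v ^+ b + v ^+ (t + b).+1 * u ^+ b
    = (u ^+ t.+1 + v ^+ t.+1) * (u ^+ b * v ^+ b).
  by rewrite -addSn !exprD; ring.
apply: ile_mulr; rewrite -fr // exprSr.
by apply: ile_mul2; [apply: ile_expn; apply: ile_addl | apply: ile_addr].
Qed.

Section OrbitSums.
Variable n : nat.
Implicit Types (d : 'I_n -> nat) (x y : 'I_n -> X) (S T : {set 'I_n}).

Definition mono d x := \prod_j x j ^+ d j.

Definition orbit_sum d x := \sum_(s : 'S_n) mono d (fun j => x (s j)).

Definition incr d S j := (d j + (j \in S))%N.

Lemma eq_orbit_sum d1 d2 x : d1 =1 d2 -> orbit_sum d1 x = orbit_sum d2 x.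
Proof. by move=> e; apply: eq_bigr => s _; apply: eq_bigr => j _; rewrite e. Qed.

Lemma orbit_sum_perm d x (t : 'S_n) : orbit_sum d (fun j => x (t j)) = orbit_sum d x.
Proof.
rewrite /orbit_sum [RHS](reindex_inj (@mulIg _ t)) /=.
by apply: eq_bigr => s _; apply: eq_bigr => j _; rewrite permM.
Qed.

Lemma mono_le_orbit_sum d x : mono d x <=: orbit_sum d x.
Proof.
have -> : mono d x = mono d (fun j => x ((1 : 'S_n)%g j)).
  by apply: eq_bigr => j _; rewrite perm1.
exact: (ile_sum_term (fun s : 'S_n => mono d (fun j => x (s j))) (mem_index_enum _)).
Qed.

Lemma mono_perm (s : 'S_n) (m : X * {ffun 'I_n -> nat}) x :
  mono (perm_mono s m).2 x = mono m.2 (fun j => x (s j)).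
Proof.
rewrite /mono (reindex_inj (@perm_inj _ s)) /=.
by apply: eq_bigr => j _; rewrite ffunE permK.
Qed.

Lemma mono_incr d S x : mono (incr d S) x = mono d x * \prod_(j in S) x j.
Proof.
rewrite /mono [\prod_(j in S) _]big_mkcond -big_split /=.
by apply: eq_bigr => j _; rewrite /incr exprD; case: (j \in S); rewrite ?expr1 ?expr0.
Qed.

Section Exchange.
Hypothesis fr : frobenius X.
Variables (d : 'I_n -> nat) (S : {set 'I_n}).
Hypothesis d_top : forall i j, i \in S -> j \notin S -> (d j <= d i)%N.

(* Only the factors at [i] and [j] change; there the inequality is
   [frobenius_exchange]. *)
Lemma mono_incr_exchange x T i j :
  i \in S -> i \notin T -> j \in T -> j \notin S ->
  mono (incr d T) x <=:
    mono (incr d (i |: (T :\ j))) x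
    + mono (incr d (i |: (T :\ j))) (fun l => x (tperm i j l)).
Proof.
move=> iS iT jT jS; have ij : i != j by apply: contraNneq jS => <-.
set T' := i |: (T :\ j).
have split_ij (F : 'I_n -> X) :
    \prod_l F l = F i * F j * \prod_(l | (l != i) && (l != j)) F l.
  by rewrite (bigD1 i) //= (bigD1 j) 1?eq_sym //= mulrA.
have incr_ij l : l != i -> l != j -> incr d T' l = incr d T l.
  by move=> li lj; rewrite /incr !inE (negbTE li) lj.
rewrite /mono !split_ij /= tpermL tpermR.
rewrite [in X in _ + _ * X](eq_bigr (fun l => x l ^+ incr d T l)); last first.
  by move=> l /andP[li lj]; rewrite tpermD 1?eq_sym // incr_ij.
rewrite [in X in _ * X + _](eq_bigr (fun l => x l ^+ incr d T l)); last first.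
  by move=> l /andP[li lj]; rewrite incr_ij.
rewrite /incr !inE eqxx [j == i]eq_sym (negbTE ij) (negbTE iT) jT eqxx /=.
rewrite !addn0 !addn1 -mulrDl.
by apply: ile_mulr; apply: frobenius_exchange fr (d_top iS jS).
Qed.

Lemma mono_incr_le_orbit_sum x T : #|T| = #|S| ->
  mono (incr d T) x <=: orbit_sum (incr d S) x.
Proof.
move: {2}#|T :\: S| (erefl #|T :\: S|) => k; elim: k => [|k IHk] in T x *.
  move=> /eqP; rewrite cards_eq0 setD_eq0 => sTS hc.
  have /eqP -> : T == S by rewrite eqEcard sTS hc leqnn.
  exact: mono_le_orbit_sum.
move=> hk hc; have [j] : exists j, j \in T :\: S by apply/set0Pn; rewrite -cards_eq0 hk.
rewrite inE => /andP[jS jT].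
have [i] : exists i, i \in S :\: T.
  apply/set0Pn; apply: contraTneq jT => /eqP; rewrite setD_eq0 => sST.
  by have /eqP <- : S == T by rewrite eqEcard sST hc leqnn.
rewrite inE => /andP[iT iS].
apply: ile_trans (mono_incr_exchange x iS iT jT jS) _.
have hc' : #|i |: (T :\ j)| = #|S|.
  by rewrite cardsU1 in_setD1 (negbTE iT) andbF -hc (cardsD1 j T) jT add1n.
have hk' : #|(i |: (T :\ j)) :\: S| = k.
  have -> : (i |: (T :\ j)) :\: S = (T :\: S) :\ j.
    apply/setP => l; rewrite !inE.
    by case: eqVneq => [->|] /=; rewrite ?iS ?andbF // andbCA.
  by move: hk; rewrite (cardsD1 j (T :\: S)) !inE jS jT add1n => -[].
apply: ile_add; first exact: IHk.
by rewrite -(@orbit_sum_perm _ x (tperm i j)); apply: IHk.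
Qed.

Lemma orbit_sum_incr x : orbit_sum (incr d S) x = orbit_sum d x * Defs.esym x #|S|.
Proof.
apply: ile_anti.
  rewrite /orbit_sum big_distrl /=; apply: ile_sum2 => s _.
  rewrite mono_incr; apply: ile_mull.
  rewrite -(big_imset (fun i => x i)) /=; last by move=> ? ? _ _; apply: perm_inj.
  apply: (ile_sum_term (fun T : {set 'I_n} => \prod_(i in T) x i) (mem_index_enum _)).
  by rewrite card_imset //; apply: perm_inj.
rewrite [orbit_sum d x]/orbit_sum big_distrl /=; apply: ile_sum => s _.
rewrite /Defs.esym big_distrr /=; apply: ile_sum => T /eqP hT.
rewrite (reindex_inj (@perm_inj _ s)) /=.
have -> : \prod_(j | s j \in T) x (s j) = \prod_(j in s @^-1: T) x (s j).
  by apply: eq_bigl => j; rewrite inE.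
rewrite -mono_incr -(@orbit_sum_perm _ x s).
by apply: mono_incr_le_orbit_sum; rewrite card_preimset //; apply: perm_inj.
Qed.

End Exchange.

Lemma orbit_sum_const0 d x : (forall j, d j = 0%N) -> orbit_sum d x = 1.
Proof.
move=> d0; have mono1 y : mono d y = 1 by apply: big1 => j _; rewrite d0 expr0.
apply: ile_anti; first by apply: ile_sum => s _; rewrite mono1; apply: ile_refl.
by rewrite -(mono1 x); apply: mono_le_orbit_sum.
Qed.

Lemma orbit_sum_elementary : frobenius X -> forall d, exists c : {ffun 'I_n -> nat},
  forall x, orbit_sum d x = \prod_(j < n) Defs.esym x j.+1 ^+ c j.
Proof.
move=> fr d; elim: {d}_.+1 {-2}d (ltnSn (\sum_j d j)) => // N IHN d hd.
pose S := [set j | (0 < d j)%N].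
have [S0 | [i0 i0S]] := set_0Vmem S.
  exists [ffun => 0%N] => x; rewrite big1 => [|j _]; last by rewrite ffunE expr0.
  apply: orbit_sum_const0 => j; apply/eqP; rewrite -leqn0 leqNgt.
  by have := in_set0 j; rewrite -S0 inE => ->.
pose d' j := (d j - (j \in S))%N.
have dE : d =1 incr d' S.
  move=> j; rewrite /incr /d' inE; case: ltnP => [/subnK //|].
  by rewrite leqn0 => /eqP ->.
have d'_top i j : i \in S -> j \notin S -> (d' j <= d' i)%N.
  by move=> _; rewrite inE -leqNgt leqn0 /d' => /eqP ->.
have sumE : (\sum_j d j = \sum_j d' j + #|S|)%N.
  rewrite -sum1_card [\sum_(j in S) 1]big_mkcond -big_split /=.
  by apply: eq_bigr => j _; rewrite dE /incr; case: (j \in S).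
have S_gt0 : (0 < #|S|)%N by rewrite card_gt0; apply/set0Pn; exists i0.
have [c hc] : exists c : {ffun 'I_n -> nat},
    forall x, orbit_sum d' x = \prod_(j < n) Defs.esym x j.+1 ^+ c j.
  by apply: IHN; rewrite -ltnS (leq_trans _ hd) // sumE ltnS -addn1 leq_add2l.
have S_le : (#|S|.-1 < n)%N by rewrite prednK // (leq_trans (max_card _)) ?card_ord.
pose j0 := Ordinal S_le.
exists [ffun j => c j + (j == j0)]%N => x.
rewrite (eq_orbit_sum x dE) orbit_sum_incr // hc.
under [RHS]eq_bigr do rewrite ffunE exprD.
rewrite big_split /=; congr (_ * _).
by rewrite (bigD1 j0) //= eqxx expr1 big1 ?mulr1 ?prednK // => j /negbTE ->.
Qed.

Lemma peval_sym (p : pexpr X n) x : sym_pexpr p ->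
  peval p x = \sum_(m <- p) m.1 * orbit_sum m.2 x.
Proof.
move=> p_sym; apply: ile_anti.
  by apply: ile_sum2 => m _; apply/ile_mull/mono_le_orbit_sum.
rewrite big_seq; apply: ile_sum => m mp; rewrite /orbit_sum big_distrr /=.
apply: ile_sum => s _; rewrite -mono_perm.
exact: (ile_sum_term (fun m : X * {ffun 'I_n -> nat} => m.1 * mono m.2 x) (p_sym m mp s)).
Qed.

Lemma frobenius_n_elementary : frobenius X -> n_elementary X n.
Proof.
move=> fr p p_sym; suff [r hr] : exists r : pexpr X n,
    forall x, \sum_(m <- p) m.1 * orbit_sum m.2 x = peval r (elem_vec x).
  by exists r => x; rewrite peval_sym.
elim: p {p_sym} => [|m p [r hr]]; first by exists [::] => x; rewrite /peval !big_nil.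
have [c hc] := orbit_sum_elementary fr m.2.
by exists ((m.1, c) :: r) => x; rewrite /peval !big_cons hr hc.
Qed.

Definition orbit_pexpr (m : X * {ffun 'I_n -> nat}) : pexpr X n :=
  [seq perm_mono s m | s <- index_enum 'S_n].

Lemma sym_orbit_pexpr m : sym_pexpr (orbit_pexpr m).
Proof.
move=> _ /mapP[s _ ->] t; apply/mapP; exists (s * t)%g; first exact: mem_index_enum.
by congr (_, _); apply/ffunP => i; rewrite !ffunE invMg permM.
Qed.

Lemma peval_orbit_pexpr m x : peval (orbit_pexpr m) x = m.1 * orbit_sum m.2 x.
Proof.
rewrite /peval big_map /orbit_sum big_distrr /=.
by apply: eq_bigr => s _; rewrite -mono_perm.
Qed.

End OrbitSums.

Lemma ord2_cases (i : 'I_2) : i = ord0 \/ i = ord_max.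
Proof. by case: i => -[|[|//]] ?; [left | right]; apply: val_inj. Qed.

Lemma esym_merge2_le (u v : X) k :
  Defs.esym (fun i : 'I_2 => if i == ord0 then u + v else 0) k.+1
  <=: Defs.esym (fun i : 'I_2 => if i == ord0 then u else v) k.+1.
Proof.
set z := fun i : 'I_2 => if i == ord0 then u else v.
apply: ile_sum => S /eqP hS.
have [Smax | Snmax] := boolP (ord_max \in S).
  by rewrite (bigD1 ord_max) //= mul0r; apply: ile0.
have S1 : S = [set ord0].
  apply/eqP; rewrite eqEcard cards1 hS andbT; apply/subsetP => l.
  by case: (ord2_cases l) => -> h; [rewrite set11 | rewrite h in Snmax].
have z1 a : z a <=: Defs.esym z k.+1.
  have -> : z a = \prod_(i in [set a]) z i by rewrite big_set1.
  apply: (ile_sum_term _ (mem_index_enum _)).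
  by rewrite -hS S1 !cards1.
by rewrite S1 big_set1 /= -[u]/(z ord0) -[v]/(z ord_max); apply: ile_add.
Qed.

Lemma n_elementary2_frobenius : n_elementary X 2 -> frobenius X.
Proof.
move=> el2 u v k _.
pose m : X * {ffun 'I_2 -> nat} := (1, [ffun i => if i == ord0 then k else 0%N]).
have mono_m y : mono m.2 y = y ord0 ^+ k.
  by rewrite /mono big_ord_recl big_ord1 !ffunE /= expr0 mulr1.
have [r hr] := el2 _ (@sym_orbit_pexpr _ m).
have orbit_m y : orbit_sum m.2 y = peval r (elem_vec y).
  by rewrite -hr peval_orbit_pexpr mul1r.
apply: ile_anti; last first.
  by apply: ile_add; apply: ile_expn; [apply: ile_addl | apply: ile_addr].
pose w := fun i : 'I_2 => if i == ord0 then u + v else 0.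
have -> : (u + v) ^+ k = mono m.2 w by rewrite mono_m.
apply: ile_trans (mono_le_orbit_sum _ _) _.
rewrite orbit_m; apply: ile_trans (peval_ile r (fun j => esym_merge2_le u v j)) _.
rewrite -orbit_m; apply: ile_sum => s _; rewrite mono_m.
by case: (ord2_cases (s ord0)) => ->; [apply: ile_addl | apply: ile_addr].
Qed.

End IdempotentSemiring.

Theorem corollary4p7 (X : comPzSemiRingType) :
  idempotent_sr X -> (fully_elementary X <-> frobenius X).
Proof.
move=> idem; split=> [el | fr n]; first exact: n_elementary2_frobenius idem (el 2%N).
exact: frobenius_n_elementary.
Qed.
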